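(* Let $d\geqslant1$, let $u_1,\dots,u_d\in\mathbb{Z}^d$ satisfy no nontrivial $\mathbb{Z}$-linear relation, let $\mathcal{L}=\mathbb{Z}u_1+\dots+\mathbb{Z}u_d$ and $P=\mathbb{N}u_1+\dots+\mathbb{N}u_d$. Then: (1) A subset $M\subseteq\mathbb{Z}^d$ is a complement of $P$ in $\mathbb{Z}^d$ if and only if for every coset $c$ of $\mathcal{L}$ in $\mathbb{Z}^d$ and every real number $N$ there exists $x\in M\cap c$ all of whose coordinates with respect to $u_1,\dots,u_d$ are $\leqslant N$. (2) $P$ has complements in $\mathbb{Z}^d$. (3) $P$ has no minimal complement in $\mathbb{Z}^d$. (4) No complement of $P$ in $\mathbb{Z}^d$ contains a minimal complement of $P$.
   Context: $\mathbb{N}=\{0,1,2,\dots\}$. Since $u_1,\dots,u_d$ form a $\mathbb{Q}$-basis of $\mathbb{Q}^d$, each $x\in\mathbb{Z}^d$ can be written uniquely as $x=t_1u_1+\dots+t_du_d$ with $t_i\in\mathbb{Q}$; the $t_i$ are its coordinates with respect to $u_1,\dots,u_d$. A nonempty set $M$ is a complement of $W$ in $\mathbb{Z}^d$ if $W+M=\mathbb{Z}^d$; it is minimal if no proper subset of $M$ is a complement of $W$. *)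

From HB Require Import structures.
From mathcomp Require Import all_boot all_order all_algebra.
From mathcomp Require Import reals.
Set Implicit Arguments. Unset Strict Implicit. Unset Printing Implicit Defensive.
Import Order.TTheory GRing.Theory Num.Theory.
Local Open Scope ring_scope.

Notation Zd d := 'rV[int]_d.

Definition Zfree (d : nat) (u : 'I_d -> Zd d) : Prop :=
  forall c : 'I_d -> int, \sum_i c i *: u i = 0 -> forall i, c i = 0.

Definition latt (d : nat) (u : 'I_d -> Zd d) (x : Zd d) : Prop :=
  exists c : 'I_d -> int, x = \sum_i c i *: u i.

Definition ncone (d : nat) (u : 'I_d -> Zd d) (x : Zd d) : Prop :=
  exists n : 'I_d -> nat, x = \sum_i (n i)%:Z *: u i.

(* All (rational) coordinates of x with respect to u_1..u_d are <= N.
   Since u is a Q-basis, the coordinate vector t is unique. *)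
Definition coords_le (R : realType) (d : nat) (u : 'I_d -> Zd d)
  (x : Zd d) (N : R) : Prop :=
  exists t : 'I_d -> rat,
    map_mx (intr : int -> rat) x = \sum_i t i *: map_mx (intr : int -> rat) (u i)
    /\ forall i, ratr (t i) <= N.

Definition complement (d : nat) (W M : Zd d -> Prop) : Prop :=
  (exists m, M m) /\ forall z : Zd d, exists w m, W w /\ M m /\ z = w + m.

Definition minimal_complement (d : nat) (W M : Zd d -> Prop) : Prop :=
  complement W M /\
  forall M' : Zd d -> Prop, (forall x, M' x -> M x) -> (exists x, M x /\ ~ M' x) ->
    ~ complement W M'.

From HB Require Import structures.
From mathcomp Require Import all_boot all_order all_algebra.
From mathcomp Require Import reals lra.
Import Order.TTheory GRing.Theory Num.Theory.
Set Implicit Arguments. Unset Strict Implicit. Unset Printing Implicit Defensive.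
Local Open Scope ring_scope.

(* Z-independent u_1, ..., u_d form a Q-basis (clear denominators), so every x
   has rational coordinates, and adding an element of L shifts them by
   integers.  Hence z = p + m with p in P exactly when m lies in z + L and has
   all its coordinates at most those of z, and M is a complement iff every coset
   of L contains points of M whose coordinates are all below any given bound.
   This criterion survives deleting a point m from M (ask for coordinates below
   those of m), so no complement is minimal. *)

Local Notation ratv := (map_mx (intr : int -> rat)).

Lemma rat_row_scale n (r : 'rV[rat]_n) :
  exists2 a : int, a != 0 & forall i, a%:~R * r 0 i \is a Num.int.
Proof.
exists (\prod_i denq (r 0 i)) => [|i].
  by apply/prodf_neq0 => i _; rewrite denq_neq0.
by rewrite (bigD1 i) //= rmorphM /= mulrC mulrA -numqE -rmorphM intr_int.
Qed.

Lemma ratv_inj m n : injective (ratv : 'M[int]_(m, n) -> 'M[rat]_(m, n)).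
Proof.
by move=> A B /matrixP AB; apply/matrixP => i j; have := AB i j; rewrite !mxE => /intr_inj.
Qed.

Section Coordinates.

Variables (d : nat) (u : 'I_d -> 'rV[int]_d).
Hypothesis u_free : Zfree u.

Definition basis_mx : 'M[rat]_d := \matrix_i ratv (u i).

Lemma mul_basis_mx (v : 'rV[rat]_d) : v *m basis_mx = \sum_i v 0 i *: ratv (u i).
Proof. by rewrite mulmx_sum_row; under eq_bigr do rewrite rowK. Qed.

Lemma ratv_comb (c : 'I_d -> int) :
  ratv (\sum_i c i *: u i) = (\row_i (c i)%:~R) *m basis_mx.
Proof.
rewrite mul_basis_mx raddf_sum; apply: eq_bigr => i _.
by rewrite mxE /= map_mxZ.
Qed.

Lemma basis_mx_unit : basis_mx \in unitmx.
Proof.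
rewrite -row_free_unit; apply: inj_row_free => r r0.
have [a a0 a_r] := rat_row_scale r.
have /u_free c0 : \sum_i numq (a%:~R * r 0 i) *: u i = 0.
  apply: ratv_inj; rewrite ratv_comb map_mx0.
  have -> : \row_i (numq (a%:~R * r 0 i))%:~R = a%:~R *: r.
    by apply/rowP => i; rewrite !mxE numqK ?a_r.
  by rewrite -scalemxAl r0 scaler0.
apply/rowP => i; apply: (mulfI (_ : a%:~R != 0)); first by rewrite intr_eq0.
by rewrite mxE mulr0 -[LHS]numqK ?a_r // c0.
Qed.

Definition coord (x : 'rV[int]_d) : 'rV[rat]_d := ratv x *m invmx basis_mx.

Lemma coord_translate x (c : 'I_d -> int) i :
  coord (x + \sum_j c j *: u j) 0 i = coord x 0 i + (c i)%:~R.
Proof.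
by rewrite /coord raddfD /= mulmxDl ratv_comb mulmxK ?basis_mx_unit // !mxE.
Qed.

Lemma coords_leP (R : realType) x (N : R) :
  coords_le u x N <-> forall i, ratr (coord x 0 i) <= N.
Proof.
split=> [[t [xt tN]] i | xN].
  have xE : ratv x = \row_j t j *m basis_mx.
    by rewrite mul_basis_mx xt; apply: eq_bigr => j _; rewrite mxE.
  by rewrite /coord xE mulmxK ?basis_mx_unit // mxE.
exists (coord x 0); split=> //.
by rewrite -mul_basis_mx mulmxKV ?basis_mx_unit.
Qed.

End Coordinates.

Lemma exists_nat_ub (R : archiRealDomainType) n (t : 'I_n -> R) :
  exists K : nat, forall i, t i <= K%:R.
Proof.
exists (\max_i Num.bound `|t i|) => i.
apply: le_trans (ler_norm _) (ltW (lt_le_trans (archi_boundP (normr_ge0 _)) _)).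
by rewrite ler_nat (leq_bigmax i).
Qed.

Lemma ncone_comb d (u : 'I_d -> 'rV[int]_d) (c : 'I_d -> int) :
  (forall i, 0 <= c i) -> ncone u (\sum_i c i *: u i).
Proof.
by move=> c_ge0; exists (fun i => `|c i|%N); apply: eq_bigr => i _; rewrite gez0_abs.
Qed.

Section ComplementCriterion.

Variables (R : realType) (d : nat) (u : 'I_d -> 'rV[int]_d).
Hypothesis u_free : Zfree u.

Definition low_in_cosets (M : 'rV[int]_d -> Prop) :=
  forall x0 (N : R), exists x, M x /\ latt u (x - x0) /\ coords_le u x N.

Lemma complement_low_in_cosets M : complement (ncone u) M -> low_in_cosets M.
Proof.
move=> [_ PM] x0 N.
have [K K_ub] := exists_nat_ub (fun i => ratr (coord u x0 0 i) - N).
have [_ [m [[n ->] [Mm x0E]]]] := PM (x0 - \sum_i K%:Z *: u i).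
pose c i := - (K%:Z + (n i)%:Z).
have mE : m = x0 + \sum_i c i *: u i.
  under eq_bigr do rewrite scaleNr scalerDl opprD.
  by rewrite big_split /= !sumrN addrA x0E [_ + m]addrC addrK.
exists m; split=> //; split; first by exists c; rewrite mE addrAC subrr add0r.
apply/(coords_leP u_free) => i.
rewrite mE (coord_translate u_free) rmorphD /= ratr_int /c intrN intrD /=.
have := K_ub i; have : 0 <= (n i)%:R :> R by [].
lra.
Qed.

Lemma low_in_cosets_complement M : low_in_cosets M -> complement (ncone u) M.
Proof.
move=> MN; split; first by have [x [Mx _]] := MN 0 0; exists x.
move=> z; have [K K_ub] := exists_nat_ub (fun i => - coord u z 0 i).
have [x [Mx [[c xzE] /(coords_leP u_free) xK]]] := MN z (- K%:R).
have xE : x = z + \sum_i c i *: u i by rewrite -xzE addrC subrK.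
have c_le0 i : c i <= 0.
  have : coord u x 0 i <= - K%:R by rewrite -(ler_rat R) rmorphN /= ratr_nat.
  rewrite xE (coord_translate u_free) -(lerz0 rat); have := K_ub i; lra.
exists (\sum_i - c i *: u i), x; split; first by apply: ncone_comb => i; rewrite oppr_ge0.
split=> //; under eq_bigr do rewrite scaleNr.
by rewrite sumrN -xzE opprB subrK.
Qed.

Lemma complementP M : complement (ncone u) M <-> low_in_cosets M.
Proof. by split; [exact: complement_low_in_cosets | exact: low_in_cosets_complement]. Qed.

Hypothesis d_gt0 : (0 < d)%N.

Lemma complement_setD1 M m :
  complement (ncone u) M -> complement (ncone u) (fun x => M x /\ x <> m).
Proof.
move=> /complementP PM; apply/complementP => x0 N.
pose i0 := Ordinal d_gt0.
have [x [Mx [x_x0 /(coords_leP u_free) xN]]] :=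
  PM x0 (Num.min N (ratr (coord u m 0 i0) - 1)).
exists x; split; last split=> //.
  by split=> // xm; have := xN i0; rewrite xm le_min => /andP[_]; lra.
by apply/(coords_leP u_free) => i; apply: le_trans (xN i) _; rewrite ge_min lexx.
Qed.

Lemma not_minimal_complement M : ~ minimal_complement (ncone u) M.
Proof.
move=> [PM PM_min]; have [[m Mm] _] := PM.
apply: (PM_min (fun x => M x /\ x <> m)) (complement_setD1 m PM); first by move=> x [].
by exists m; split=> // -[].
Qed.

End ComplementCriterion.

Theorem proposition3p3 (R : realType) (d : nat) (hd : (0 < d)%N)
  (u : 'I_d -> 'rV[int]_d) (hu : Zfree u) :
  (forall M : 'rV[int]_d -> Prop,
     complement (ncone u) M <->
     (forall (x0 : 'rV[int]_d) (N : R),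
        exists x, M x /\ latt u (x - x0) /\ coords_le u x N))
  /\ (exists M : 'rV[int]_d -> Prop, complement (ncone u) M)
  /\ ~ (exists M : 'rV[int]_d -> Prop, minimal_complement (ncone u) M)
  /\ (forall M : 'rV[int]_d -> Prop, complement (ncone u) M ->
        ~ (exists M' : 'rV[int]_d -> Prop,
             (forall x, M' x -> M x) /\ minimal_complement (ncone u) M')).
Proof.
split; first exact: complementP.
split.
  exists (fun _ => True); split=> [|z]; first by exists 0.
  exists 0, z; split; last by rewrite add0r.
  by exists (fun _ => 0%N); rewrite big1 // => i _; rewrite scale0r.
split; first by move=> [M /(not_minimal_complement R hu hd)].
by move=> M _ [M' [_ /(not_minimal_complement R hu hd)]].
Qed.
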